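(* For every $\varphi\in\mathcal{L}_{AIL}$, the canonical model $M^*$ for $cl(\varphi)$ is an epistemic model with awareness.
   Context: An epistemic model with awareness is $\langle W,\{\sim_i,\mathscr{A}_i\}_{i\in\mathcal{G}},V\rangle$ with $W\neq\emptyset$, $\sim_i$ an equivalence relation on $W$, $\mathscr{A}_i:W\to2^{\mathcal{P}}$ with $\mathscr{A}_i(w)=\mathscr{A}_i(v)$ whenever $(w,v)\in\sim_i$, and $V:\mathcal{P}\to2^W$ ($\mathcal{P}$ countable atoms, $\mathcal{G}$ finite agents). $\mathcal{L}_{AIL}$: $\varphi::=p\mid\neg\varphi\mid\varphi\wedge\varphi\mid A_i\varphi\mid I_i\varphi\mid E_i\varphi\mid[\approx]_i\varphi\mid[\circ^+]_i\varphi$. Hilbert system $\mathbf{AIL}$: axioms — propositional tautologies; $A_i\varphi\leftrightarrow A_i\neg\varphi$; $A_i(\varphi\wedge\psi)\leftrightarrow A_i\varphi\wedge A_i\psi$; $A_i\varphi\leftrightarrow A_iO_j\varphi$ for $O_j\in\{A_j,I_j,[\approx]_j,[\circ^+]_j,E_j\}$; $A_i\varphi\to I_iA_i\varphi$; $\neg A_i\varphi\to I_i\neg A_i\varphi$; $A_ip\wedge p\to[\approx]_ip$; for $\Box\in\{I_i,[\approx]_i\}$: $\Box(\varphi\to\psi)\to(\Box\varphi\to\Box\psi)$, $\Box\varphi\to\varphi$, $\neg\Box\varphi\to\Box\neg\Box\varphi$; $[\circ^+]_i(\varphi\to\psi)\to([\circ^+]_i\varphi\to[\circ^+]_i\psi)$;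 $[\circ^+]_i\varphi\to\varphi\wedge[\approx]_iI_i[\circ^+]_i\varphi$; $[\circ^+]_i(\varphi\to[\approx]_iI_i\varphi)\to(\varphi\to[\circ^+]_i\varphi)$; $E_i\varphi\leftrightarrow A_i\varphi\wedge[\circ^+]_i\varphi$; rules: modus ponens, necessitation for $I_i,[\approx]_i,[\circ^+]_i$. $\Gamma\vdash\varphi$ iff $\vdash\bigwedge\Gamma'\to\varphi$ for some finite $\Gamma'\subseteq\Gamma$. $cl(\varphi)$ is the smallest set containing $\varphi$ closed under: subformulas; $\neg\psi$ for non-negations $\psi$; $A_i\psi\Rightarrow A_i\chi$ for subformulas $\chi$ of $\psi$; $A_i\psi\Rightarrow I_iA_i\psi,I_i\neg A_i\psi,[\approx]_ip$ for atoms $p$ in $\psi$; $I_i\psi\Rightarrow I_iI_i\psi,I_i\neg I_i\psi$ unless $\psi$ is $I_i\chi$ or $\neg I_i\chi$; analogously for $[\approx]_i$; $[\circ^+]_i\psi\Rightarrow[\approx]_iI_i[\circ^+]_i\psi$; $E_i\psi\Rightarrow A_i\psi,[\circ^+]_i\psi$. A maximal consistent set in $\Phi$ is $\Gamma\subseteq\Phi$ with $\Gamma\nvdash\bot$ and no consistent $\Gamma'\subseteq\Phi$ properly extending it. The canonical model for $\Phi$ is $M^*=\langle W^*,\{\sim_i^*,\mathscr{A}_i^*\},V^*\rangle$: $W^*$ is the set of maximal consistent sets in $\Phi$; $(\Gamma,\Delta)\in\sim_i^*$ iff $\{\psi: I_i\psi\in\Gamma\}\subseteq\Delta$; $V^*(p)=\{\Gamma:p\in\Gamma\}$;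 $\mathscr{A}_i^*(\Gamma)=\{p: A_ip\in\Gamma\}$. *)

From Stdlib Require Import List Bool.
Import ListNotations.

Set Implicit Arguments.

Section AIL.

Variable Ag : Type.

Inductive form : Type :=
  | Atom : nat -> form
  | Neg  : form -> form
  | And  : form -> form -> form
  | FA   : Ag -> form -> form
  | FI   : Ag -> form -> form
  | FAp  : Ag -> form -> form
  | FCp  : Ag -> form -> form
  | FE   : Ag -> form -> form.

Definition Imp (a b : form) : form := Neg (And a (Neg b)).
Definition Iff (a b : form) : form := And (Imp a b) (Imp b a).
Definition Bot : form := And (Atom 0) (Neg (Atom 0)).
Definition Top : form := Neg Bot.

(* Propositional evaluation: non-boolean formulas are treated as atoms. *)
Fixpoint peval (v : form -> bool) (f : form) : bool :=
  match f with
  | Neg a => negb (peval v a)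
  | And a b => peval v a && peval v b
  | _ => v f
  end.

Definition tautology (f : form) : Prop := forall v, peval v f = true.

Inductive Prov : form -> Prop :=
  | Ax_taut : forall f, tautology f -> Prov f
  | Ax_Aneg : forall i f, Prov (Iff (FA i f) (FA i (Neg f)))
  | Ax_Aand : forall i f g, Prov (Iff (FA i (And f g)) (And (FA i f) (FA i g)))
  | Ax_AA   : forall i j f, Prov (Iff (FA i f) (FA i (FA j f)))
  | Ax_AI   : forall i j f, Prov (Iff (FA i f) (FA i (FI j f)))
  | Ax_AAp  : forall i j f, Prov (Iff (FA i f) (FA i (FAp j f)))
  | Ax_ACp  : forall i j f, Prov (Iff (FA i f) (FA i (FCp j f)))
  | Ax_AE   : forall i j f, Prov (Iff (FA i f) (FA i (FE j f)))
  | Ax_AIA  : forall i f, Prov (Imp (FA i f) (FI i (FA i f)))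
  | Ax_nAInA : forall i f, Prov (Imp (Neg (FA i f)) (FI i (Neg (FA i f))))
  | Ax_ApAt : forall i p, Prov (Imp (And (FA i (Atom p)) (Atom p)) (FAp i (Atom p)))
  | Ax_KI   : forall i f g, Prov (Imp (FI i (Imp f g)) (Imp (FI i f) (FI i g)))
  | Ax_TI   : forall i f, Prov (Imp (FI i f) f)
  | Ax_5I   : forall i f, Prov (Imp (Neg (FI i f)) (FI i (Neg (FI i f))))
  | Ax_KAp  : forall i f g, Prov (Imp (FAp i (Imp f g)) (Imp (FAp i f) (FAp i g)))
  | Ax_TAp  : forall i f, Prov (Imp (FAp i f) f)
  | Ax_5Ap  : forall i f, Prov (Imp (Neg (FAp i f)) (FAp i (Neg (FAp i f))))
  | Ax_KCp  : forall i f g, Prov (Imp (FCp i (Imp f g)) (Imp (FCp i f) (FCp i g)))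
  | Ax_Cp   : forall i f, Prov (Imp (FCp i f) (And f (FAp i (FI i (FCp i f)))))
  | Ax_CpInd : forall i f,
      Prov (Imp (FCp i (Imp f (FAp i (FI i f)))) (Imp f (FCp i f)))
  | Ax_E    : forall i f, Prov (Iff (FE i f) (And (FA i f) (FCp i f)))
  | R_MP    : forall f g, Prov (Imp f g) -> Prov f -> Prov g
  | R_NecI  : forall i f, Prov f -> Prov (FI i f)
  | R_NecAp : forall i f, Prov f -> Prov (FAp i f)
  | R_NecCp : forall i f, Prov f -> Prov (FCp i f).

Fixpoint bigconj (l : list form) : form :=
  match l with
  | [] => Top
  | f :: l' => And f (bigconj l')
  end.

Definition Derives (Gamma : form -> Prop) (f : form) : Prop :=
  exists l : list form, (forall x, In x l -> Gamma x) /\ Prov (Imp (bigconj l) f).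

Definition consistent (Gamma : form -> Prop) : Prop := ~ Derives Gamma Bot.

Definition subset (X Y : form -> Prop) : Prop := forall x, X x -> Y x.

Definition mcs_in (Phi Gamma : form -> Prop) : Prop :=
  subset Gamma Phi /\ consistent Gamma /\
  ~ (exists Gamma', subset Gamma' Phi /\ consistent Gamma' /\
                    subset Gamma Gamma' /\ ~ subset Gamma' Gamma).

Inductive subf : form -> form -> Prop :=
  | sf_refl : forall f, subf f f
  | sf_neg  : forall x f, subf x f -> subf x (Neg f)
  | sf_andl : forall x f g, subf x f -> subf x (And f g)
  | sf_andr : forall x f g, subf x g -> subf x (And f g)
  | sf_A    : forall x i f, subf x f -> subf x (FA i f)
  | sf_I    : forall x i f, subf x f -> subf x (FI i f)
  | sf_Ap   : forall x i f, subf x f -> subf x (FAp i f)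
  | sf_Cp   : forall x i f, subf x f -> subf x (FCp i f)
  | sf_E    : forall x i f, subf x f -> subf x (FE i f).

Definition is_neg (f : form) : Prop := exists g, f = Neg g.

Inductive cl (phi : form) : form -> Prop :=
  | cl_base : cl phi phi
  | cl_sub : forall f g, cl phi f -> subf g f -> cl phi g
  | cl_neg : forall f, cl phi f -> ~ is_neg f -> cl phi (Neg f)
  | cl_Asub : forall i f g, cl phi (FA i f) -> subf g f -> cl phi (FA i g)
  | cl_AIA : forall i f, cl phi (FA i f) -> cl phi (FI i (FA i f))
  | cl_AInA : forall i f, cl phi (FA i f) -> cl phi (FI i (Neg (FA i f)))
  | cl_AAp : forall i f p, cl phi (FA i f) -> subf (Atom p) f -> cl phi (FAp i (Atom p))
  | cl_II : forall i f, cl phi (FI i f) ->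
      ~ (exists g, f = FI i g \/ f = Neg (FI i g)) -> cl phi (FI i (FI i f))
  | cl_InI : forall i f, cl phi (FI i f) ->
      ~ (exists g, f = FI i g \/ f = Neg (FI i g)) -> cl phi (FI i (Neg (FI i f)))
  | cl_ApAp : forall i f, cl phi (FAp i f) ->
      ~ (exists g, f = FAp i g \/ f = Neg (FAp i g)) -> cl phi (FAp i (FAp i f))
  | cl_ApnAp : forall i f, cl phi (FAp i f) ->
      ~ (exists g, f = FAp i g \/ f = Neg (FAp i g)) -> cl phi (FAp i (Neg (FAp i f)))
  | cl_Cp : forall i f, cl phi (FCp i f) -> cl phi (FAp i (FI i (FCp i f)))
  | cl_EA : forall i f, cl phi (FE i f) -> cl phi (FA i f)
  | cl_ECp : forall i f, cl phi (FE i f) -> cl phi (FCp i f).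

Definition epistemic_model_awareness (W : Type) (R : Ag -> W -> W -> Prop)
    (Aw : Ag -> W -> nat -> Prop) (V : nat -> W -> Prop) : Prop :=
  inhabited W /\
  (forall i, (forall w, R i w w) /\
             (forall w v, R i w v -> R i v w) /\
             (forall w v u, R i w v -> R i v u -> R i w u)) /\
  (forall i w v, R i w v -> Aw i w = Aw i v).

Definition canW (Phi : form -> Prop) : Type := { G : form -> Prop | mcs_in Phi G }.

Definition canR (Phi : form -> Prop) (i : Ag) (G D : canW Phi) : Prop :=
  forall f, proj1_sig G (FI i f) -> proj1_sig D f.

Definition canV (Phi : form -> Prop) (p : nat) (G : canW Phi) : Prop :=
  proj1_sig G (Atom p).

Definition canA (Phi : form -> Prop) (i : Ag) (G : canW Phi) : nat -> Prop :=
  fun p => proj1_sig G (FA i (Atom p)).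

End AIL.

Arguments canR {Ag} Phi i G D.
Arguments canA {Ag} Phi i G p.
Arguments canV {Ag} Phi p G.

From Stdlib Require Import List Bool Classical FunctionalExtensionality PropExtensionality.
Import ListNotations.

(* Reflexivity of ~*_i is axiom T for I_i.  As cl(phi) is not closed under
   I_i, symmetry and transitivity rest on the invariance of the I_i-formulas
   of cl(phi) along ~*_i: if I_i psi and one of I_i I_i psi, I_i ~I_i psi lie
   in cl(phi), axioms 4 (derivable from T, K and 5) and 5 transport it;
   otherwise the closure rules force psi to be I_i chi or ~I_i chi, which is
   handled by induction on psi.  Awareness sets agree along ~*_i by the same
   transport using A_i p -> I_i A_i p and ~A_i p -> I_i ~A_i p.  The model is
   non-empty since every theorem is true under the valuation making each A_i
   true, every other modality the identity and every atom false, so the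
   formulas of cl(phi) true under it form a maximal consistent set. *)

Set Implicit Arguments.
Unset Strict Implicit.

Ltac case_formula_values :=
  repeat match goal with
  | |- context [?v ?x] => match type of x with form _ => destruct (v x) end
  end.

Ltac prop_tauto :=
  intro; unfold Imp, Iff, Top, Bot; simpl; case_formula_values; simpl;
  intros; first [reflexivity | congruence].

Section Completeness.
Variable Ag : Type.
Implicit Types a b c f g x : form Ag.

Lemma taut_consequence a b :
  (forall v, peval v a = true -> peval v b = true) -> Prov a -> Prov b.
Proof.
  intros Hab Ha. apply (R_MP (f := a)); [|exact Ha].
  apply Ax_taut. intro v. specialize (Hab v). unfold Imp. simpl.
  destruct (peval v a), (peval v b); simpl; auto.
Qed.

Lemma taut_consequence2 a b c :
  (forall v, peval v a = true -> peval v b = true -> peval v c = true) ->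
  Prov a -> Prov b -> Prov c.
Proof.
  intros Habc Ha Hb. apply (R_MP (f := b)); [|exact Hb].
  apply (R_MP (f := a)); [|exact Ha].
  apply Ax_taut. intro v. specialize (Habc v). unfold Imp. simpl.
  destruct (peval v a), (peval v b), (peval v c); simpl; auto.
Qed.

Lemma Prov_imp_trans a b c : Prov (Imp a b) -> Prov (Imp b c) -> Prov (Imp a c).
Proof. apply taut_consequence2. prop_tauto. Qed.

Lemma peval_bigconj_app v (l1 l2 : list (form Ag)) :
  peval v (bigconj (l1 ++ l2)) = peval v (bigconj l1) && peval v (bigconj l2).
Proof.
  induction l1 as [|a l1 IH]; simpl.
  - unfold Top, Bot; simpl. destruct (v (Atom Ag 0)); reflexivity.
  - rewrite IH. destruct (peval v a), (peval v (bigconj l1)); reflexivity.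
Qed.

Lemma Prov_I_4 i f : Prov (Imp (FI i f) (FI i (FI i f))).
Proof.
  pose (nInI := Neg (FI i (Neg (FI i f)))).
  assert (to_nInI : Prov (Imp (FI i f) nInI)).
  { generalize (Ax_TI i (Neg (FI i f))). apply taut_consequence. prop_tauto. }
  assert (from_nInI : Prov (Imp nInI (FI i f))).
  { generalize (Ax_5I i f). apply taut_consequence. prop_tauto. }
  apply (Prov_imp_trans to_nInI), (Prov_imp_trans (Ax_5I i (Neg (FI i f)))).
  exact (R_MP (Ax_KI i nInI (FI i f)) (R_NecI i from_nInI)).
Qed.

Section Derivability.
Variable Gamma : form Ag -> Prop.

Lemma Derives_in x : Gamma x -> Derives Gamma x.
Proof.
  intro Hx. exists [x]. split.
  - intros y [<-|[]]; exact Hx.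
  - apply Ax_taut. prop_tauto.
Qed.

Lemma Derives_mp a b : Derives Gamma a -> Prov (Imp a b) -> Derives Gamma b.
Proof.
  intros [l [Hl Hla]] Hab. exists l. split; [exact Hl|].
  exact (Prov_imp_trans Hla Hab).
Qed.

Lemma Derives_and a b : Derives Gamma a -> Derives Gamma b -> Derives Gamma (And a b).
Proof.
  intros [l1 [H1 P1]] [l2 [H2 P2]]. exists (l1 ++ l2). split.
  - intros y Hy. apply in_app_or in Hy as [Hy|Hy]; auto.
  - revert P1 P2. apply taut_consequence2. intro v. unfold Imp. simpl.
    rewrite peval_bigconj_app. case_formula_values; simpl; intros; congruence.
Qed.

Lemma Derives_deduction x c :
  Derives (fun y => Gamma y \/ y = x) c -> Derives Gamma (Imp x c).
Proof.
  intros [l [Hl Hlc]].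
  assert (Hsplit : exists l', (forall y, In y l' -> Gamma y) /\
                              Prov (Imp (bigconj l') (Imp x (bigconj l)))).
  { clear Hlc. induction l as [|y l IH].
    - exists []. split; [intros _ []|]. apply Ax_taut. prop_tauto.
    - destruct IH as [l' [H1 H2]]; [intros z Hz; apply Hl; right; exact Hz|].
      destruct (Hl y (or_introl eq_refl)) as [Hy | ->].
      + exists (y :: l'). split; [intros z [<-|Hz]; auto|].
        revert H2. apply taut_consequence. prop_tauto.
      + exists l'. split; [exact H1|]. revert H2. apply taut_consequence. prop_tauto. }
  destruct Hsplit as [l' [H1 H2]]. exists l'. split; [exact H1|].
  revert H2 Hlc. apply taut_consequence2. prop_tauto.
Qed.

Lemma Derives_Bot_of_both x : Gamma x -> Gamma (Neg x) -> Derives Gamma (Bot Ag).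
Proof.
  intros H1 H2. exists [x; Neg x]. split.
  - intros y [<-|[<-|[]]]; auto.
  - apply Ax_taut. prop_tauto.
Qed.

End Derivability.

Section MaximalConsistent.
Variables Phi G : form Ag -> Prop.
Hypothesis HG : mcs_in Phi G.

Lemma mcs_sub x : G x -> Phi x.
Proof. apply (proj1 HG). Qed.

Lemma mcs_not_both x : G x -> G (Neg x) -> False.
Proof. intros H1 H2. exact (proj1 (proj2 HG) (Derives_Bot_of_both H1 H2)). Qed.

Lemma mcs_extension_inconsistent x :
  Phi x -> ~ G x -> Derives (fun y => G y \/ y = x) (Bot Ag).
Proof.
  intros Hx Hnx. destruct HG as [_ [_ Hmax]].
  apply NNPP. intro Hcons. apply Hmax. exists (fun y => G y \/ y = x).
  repeat split.
  - intros y [Hy| ->]; [exact (mcs_sub Hy) | exact Hx].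
  - exact Hcons.
  - intros y Hy. left. exact Hy.
  - intro Hsub. exact (Hnx (Hsub x (or_intror eq_refl))).
Qed.

Lemma mcs_derives_closed f : Derives G f -> Phi f -> G f.
Proof.
  intros Hf HPhi. apply NNPP. intro Hnf.
  apply (proj1 (proj2 HG)).
  apply (Derives_mp (Derives_and Hf
           (Derives_deduction (mcs_extension_inconsistent HPhi Hnf)))).
  apply Ax_taut. prop_tauto.
Qed.

Lemma mcs_mp a b : G a -> Prov (Imp a b) -> Phi b -> G b.
Proof. intros Ha Hab Hb. exact (mcs_derives_closed (Derives_mp (Derives_in Ha) Hab) Hb). Qed.

Lemma mcs_neg x : Phi x -> Phi (Neg x) -> ~ G x -> G (Neg x).
Proof.
  intros Hx Hnx Hnotx. apply (mcs_derives_closed (f := Neg x)); [|exact Hnx].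
  apply (Derives_mp (Derives_deduction (mcs_extension_inconsistent Hx Hnotx))).
  apply Ax_taut. prop_tauto.
Qed.

End MaximalConsistent.

Section TruthSet.
Variable Phi : form Ag -> Prop.
Hypothesis Phi_neg_inv : forall g, Phi (Neg g) -> Phi g.
Hypothesis Phi_neg : forall f, Phi f -> ~ is_neg f -> Phi (Neg f).
Variable t : form Ag -> bool.
Hypothesis peval_t : forall f, peval t f = t f.
Hypothesis t_sound : forall f, Prov f -> t f = true.

Lemma t_neg f : t (Neg f) = negb (t f).
Proof. rewrite <- peval_t. simpl. rewrite peval_t. reflexivity. Qed.

Lemma mcs_truth_set : mcs_in Phi (fun f => Phi f /\ t f = true).
Proof.
  split; [|split].
  - intros x [Hx _]. exact Hx.
  - intros [l [Hl HlBot]].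
    assert (Hconj : peval t (bigconj l) = true).
    { clear HlBot. induction l as [|a l IH]; simpl.
      - unfold Top, Bot. simpl. destruct (t (Atom Ag 0)); reflexivity.
      - rewrite peval_t, (proj2 (Hl a (or_introl eq_refl))).
        apply IH. intros y Hy. apply Hl. right. exact Hy. }
    apply t_sound in HlBot. rewrite <- peval_t in HlBot.
    revert HlBot Hconj. unfold Imp, Bot. simpl.
    destruct (peval t (bigconj l)), (t (Atom Ag 0)); discriminate.
  - intros [G' [HG'Phi [HG'cons [Hsub Hnsub]]]]. apply Hnsub. intros f Hf.
    split; [exact (HG'Phi f Hf)|].
    destruct (t f) eqn:Htf; [reflexivity|]. exfalso. apply HG'cons.
    destruct (classic (is_neg f)) as [[g ->]|Hnneg].
    + rewrite t_neg in Htf.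
      apply (Derives_Bot_of_both (x := g)); [|exact Hf].
      apply Hsub. split; [exact (Phi_neg_inv (HG'Phi _ Hf))|].
      destruct (t g); [reflexivity | discriminate].
    + apply (Derives_Bot_of_both Hf). apply Hsub.
      split; [exact (Phi_neg (HG'Phi f Hf) Hnneg)|].
      rewrite t_neg, Htf. reflexivity.
Qed.

End TruthSet.

Fixpoint collapse_val (f : form Ag) : bool :=
  match f with
  | Atom _ _ => false
  | Neg a => negb (collapse_val a)
  | And a b => collapse_val a && collapse_val b
  | FA _ _ => true
  | FI _ a | FAp _ a | FCp _ a | FE _ a => collapse_val a
  end.

Lemma peval_collapse_val f : peval collapse_val f = collapse_val f.
Proof. induction f; simpl; try rewrite IHf; try rewrite IHf1, IHf2; reflexivity. Qed.

Lemma collapse_val_mp a b :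
  collapse_val (Imp a b) = true -> collapse_val a = true -> collapse_val b = true.
Proof. unfold Imp. simpl. intros Hab Ha. rewrite Ha in Hab. destruct (collapse_val b); auto. Qed.

Lemma collapse_val_sound f : Prov f -> collapse_val f = true.
Proof.
  induction 1; try (unfold Imp, Iff; simpl; case_formula_values; reflexivity);
    simpl; eauto using collapse_val_mp.
  rewrite <- peval_collapse_val. auto.
Qed.

Lemma cl_neg_inv (phi : form Ag) g : cl phi (Neg g) -> cl phi g.
Proof. intro Hg. exact (cl_sub Hg (sf_neg (sf_refl g))). Qed.

Lemma cl_mcs_exists (phi : form Ag) : exists G, mcs_in (cl phi) G.
Proof.
  eexists. apply mcs_truth_set.
  - exact (@cl_neg_inv phi).
  - exact (@cl_neg _ phi).
  - exact peval_collapse_val.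
  - exact collapse_val_sound.
Qed.

Section CanonicalRelation.
Variables (phi : form Ag) (i : Ag) (G D : form Ag -> Prop).
Hypotheses (HG : mcs_in (cl phi) G) (HD : mcs_in (cl phi) D).
Hypothesis GD : forall f, G (FI i f) -> D f.

Lemma canR_I_forward psi : G (FI i psi) -> D (FI i psi).
Proof.
  intro Hpsi. pose proof (mcs_sub HG Hpsi) as Hcl.
  destruct (classic (cl phi (FI i (FI i psi)))) as [HII|HII].
  - exact (GD (mcs_mp HG Hpsi (Prov_I_4 i psi) HII)).
  - assert (Hshape : exists chi, psi = FI i chi \/ psi = Neg (FI i chi))
      by (apply NNPP; intro Hn; exact (HII (cl_II Hcl Hn))).
    destruct Hshape as [chi [->| ->]].
    + exact (mcs_mp HD (GD Hpsi) (Prov_I_4 i chi) Hcl).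
    + exact (mcs_mp HD (GD Hpsi) (Ax_5I i chi) Hcl).
Qed.

Lemma canR_I_backward_step psi :
  (forall chi, psi = FI i chi -> D (FI i chi) -> G (FI i chi)) ->
  D (FI i psi) -> G (FI i psi).
Proof.
  intros IH Hpsi. pose proof (mcs_sub HD Hpsi) as Hcl.
  apply NNPP. intro Hnpsi.
  assert (HnG : G (Neg (FI i psi))).
  { apply (mcs_neg HG Hcl); [|exact Hnpsi].
    apply (cl_neg Hcl). intros [g Hg]. discriminate. }
  destruct (classic (cl phi (FI i (Neg (FI i psi))))) as [HInI|HInI].
  - exact (mcs_not_both HD Hpsi (GD (mcs_mp HG HnG (Ax_5I i psi) HInI))).
  - assert (Hshape : exists chi, psi = FI i chi \/ psi = Neg (FI i chi))
      by (apply NNPP; intro Hn; exact (HInI (cl_InI Hcl Hn))).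
    destruct Hshape as [chi [->| ->]].
    + assert (HDchi : D (FI i chi))
        by exact (mcs_mp HD Hpsi (Ax_TI i _) (cl_sub Hcl (sf_I i (sf_refl _)))).
      exact (Hnpsi (mcs_mp HG (IH chi eq_refl HDchi) (Prov_I_4 i chi) Hcl)).
    + assert (HDnchi : D (Neg (FI i chi)))
        by exact (mcs_mp HD Hpsi (Ax_TI i _) (cl_sub Hcl (sf_I i (sf_refl _)))).
      destruct (classic (G (FI i chi))) as [HGchi|HGchi].
      * exact (mcs_not_both HD (canR_I_forward HGchi) HDnchi).
      * apply Hnpsi. refine (mcs_mp HG (mcs_neg HG _ _ HGchi) (Ax_5I i chi) Hcl).
        -- exact (cl_sub Hcl (sf_I i (sf_neg (sf_refl _)))).
        -- exact (cl_sub Hcl (sf_I i (sf_refl _))).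
Qed.

Lemma canR_I_backward psi : D (FI i psi) -> G (FI i psi).
Proof.
  induction psi; apply canR_I_backward_step; intros chi E; try discriminate.
  injection E as -> ->. exact IHpsi.
Qed.

Lemma canR_aware_forward p : G (FA i (Atom Ag p)) -> D (FA i (Atom Ag p)).
Proof.
  intro Hp. apply GD.
  exact (mcs_mp HG Hp (Ax_AIA i _) (cl_AIA (mcs_sub HG Hp))).
Qed.

Lemma canR_aware_backward p : D (FA i (Atom Ag p)) -> G (FA i (Atom Ag p)).
Proof.
  intro Hp. pose proof (mcs_sub HD Hp) as Hcl.
  apply NNPP. intro Hnp.
  assert (HnG : G (Neg (FA i (Atom Ag p)))).
  { apply (mcs_neg HG Hcl); [|exact Hnp].
    apply (cl_neg Hcl). intros [g Hg]. discriminate. }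
  exact (mcs_not_both HD Hp (GD (mcs_mp HG HnG (Ax_nAInA i _) (cl_AInA Hcl)))).
Qed.

End CanonicalRelation.

Section CanonicalModel.
Variable phi : form Ag.

Lemma canR_refl i (G : canW (cl phi)) : canR (cl phi) i G G.
Proof.
  destruct G as [G HG]. intros f Hf. simpl in *.
  exact (mcs_mp HG Hf (Ax_TI i f) (cl_sub (mcs_sub HG Hf) (sf_I i (sf_refl f)))).
Qed.

Lemma canR_sym i (G D : canW (cl phi)) :
  canR (cl phi) i G D -> canR (cl phi) i D G.
Proof.
  destruct G as [G HG], D as [D HD]. unfold canR. simpl. intros GD f Hf.
  pose proof (canR_I_backward HG HD GD Hf) as HGf.
  exact (mcs_mp HG HGf (Ax_TI i f) (cl_sub (mcs_sub HD Hf) (sf_I i (sf_refl f)))).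
Qed.

Lemma canR_trans i (G D U : canW (cl phi)) :
  canR (cl phi) i G D -> canR (cl phi) i D U -> canR (cl phi) i G U.
Proof.
  destruct G as [G HG], D as [D HD]. unfold canR. simpl. intros GD DU f Hf.
  exact (DU f (canR_I_forward HG HD GD Hf)).
Qed.

Lemma canA_canR i (G D : canW (cl phi)) :
  canR (cl phi) i G D -> canA (cl phi) i G = canA (cl phi) i D.
Proof.
  destruct G as [G HG], D as [D HD]. unfold canR, canA. simpl. intro GD.
  apply functional_extensionality. intro p. apply propositional_extensionality.
  split; [apply (canR_aware_forward HG) | apply (canR_aware_backward HG HD)]; exact GD.
Qed.

End CanonicalModel.

End Completeness.

Theorem lemma7 (Ag : Type) (Hfin : exists l : list Ag, forall a : Ag, In a l)
  (phi : form Ag) :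
  epistemic_model_awareness (canR (cl phi)) (canA (cl phi)) (canV (cl phi)).
Proof.
  split; [|split].
  - destruct (cl_mcs_exists phi) as [G HG]. exact (inhabits (exist _ G HG)).
  - intro i. repeat split.
    + apply canR_refl.
    + apply canR_sym.
    + apply canR_trans.
  - apply canA_canR.
Qed.
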